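(* Let $u,v$ be positive integers with $uv\equiv 0\pmod 6$. Then $\Phi(u\times v,4,2)\le\left\lfloor\frac{u}{4}\left(\left\lfloor\frac{uv-1}{3}\left\lfloor\frac{uv-2}{2}\right\rfloor\right\rfloor-1\right)\right\rfloor$.
   Context: A 2-D $(u\times v,4,2)$-OOC is a family $\mathcal C$ of $u\times v$ $(0,1)$-matrices of Hamming weight $4$ such that for all $A=(a_{ij}),B=(b_{ij})\in\mathcal C$ and integers $r$ with $A\ne B$ or $r\not\equiv0\pmod v$, $\sum_{i,j}a_{ij}b_{i,j+r}\le 2$ (column indices mod $v$). $\Phi(u\times v,4,2)$ is the largest size of such a code. *)

From mathcomp Require Import all_boot.
Set Implicit Arguments. Unset Strict Implicit. Unset Printing Implicit Defensive.

(* A u x v (0,1)-matrix is represented by its support: a set of positions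
   (i, j) : 'I_u * 'I_v with entry 1. Hamming weight = cardinality. *)
Definition mat (u v : nat) := {set 'I_u * 'I_v}.

Lemma ord_pos (v : nat) (j : 'I_v) : 0 < v.
Proof. by case: j => m Hm; apply: leq_ltn_trans Hm. Qed.

Definition shiftc (v : nat) (j : 'I_v) (r : nat) : 'I_v :=
  Ordinal (ltn_pmod (j + r) (ord_pos j)).

(* sum_{i,j} a_{ij} b_{i, j+r mod v} *)
Definition corr (u v : nat) (A B : mat u v) (r : nat) : nat :=
  #|[set p in A | (p.1, shiftc p.2 r) \in B]|.

(* A 2-D (u x v, 4, 2)-OOC: a family of weight-4 matrices with all
   auto- and cross-correlations (except the trivial ones) at most 2.
   Integer shifts r range over all of nat; since only r mod v matters
   this covers all integers. *)
Definition is_OOC (u v : nat) (C : {set mat u v}) : Prop :=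
  (forall A, A \in C -> #|A| = 4) /\
  (forall A B (r : nat), A \in C -> B \in C ->
      (A != B) || (r %% v != 0) -> corr A B r <= 2).

Definition OOC_bound (u v : nat) : nat :=
  (u * (((u * v - 1) * ((u * v - 2) %/ 2)) %/ 3 - 1)) %/ 4.

From mathcomp Require Import all_boot zify.
Set Implicit Arguments. Unset Strict Implicit. Unset Printing Implicit Defensive.

(* Put N = uv.  Every codeword A together with its v cyclic column shifts
   gives v "translates", 4-subsets of the N positions; the correlation
   condition says exactly that two distinct translates (of the same or of
   different codewords) share at most 2 positions.  So the v|C| translates
   form a family of 4-sets in which any 3 points lie in at most one block.

   Fix a point P and look at the blocks through P (the derived family).  A
   point Q <> P lies in deg Q blocks, every further point R lies together
   with P and Q in at most one block, and counting the pairs (R, block)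
   gives 2 deg Q <= N - 2.  Summing deg Q gives 3 times the number of blocks
   through P.  When 6 | N the value (N-1)(N-2)/2 is 1 mod 3, which forbids
   equality everywhere; otherwise some pair Q, R shares no block with P,
   which (by symmetry) lowers both deg Q and deg R, so the degree sum is at
   most (N-1)(N-2)/2 - 2.  Hence at most floor((N-1)/3 floor((N-2)/2)) - 1
   blocks pass through any point, and double counting the incidences
   (point, translate) yields 4 v |C| <= N times this bound. *)

Lemma card_sep_sum (I : finType) (K : {set I}) (p : pred I) :
  #|[set k in K | p k]| = \sum_(k in K) p k.
Proof.
rewrite -sum1_card big_mkcond [RHS]big_mkcond /=.
by apply: eq_bigr => k _; rewrite inE; case: (k \in K); case: (p k).
Qed.

Section Counting.
Variables (T I : finType).

Lemma incidence_count (K : {set I}) (B : I -> {set T}) (S : {set T}) :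
  \sum_(Q in S) #|[set k in K | Q \in B k]| = \sum_(k in K) #|B k :&: S|.
Proof.
under eq_bigr => Q _ do rewrite card_sep_sum.
rewrite exchange_big /=; apply: eq_bigr => k _.
rewrite -(@card_sep_sum _ S (fun Q => Q \in B k)).
by apply: eq_card => Q; rewrite !inE andbC.
Qed.

Lemma sum_le1_card (S : {set T}) (F : T -> nat) :
  (forall x, x \in S -> F x <= 1) -> \sum_(x in S) F x <= #|S|.
Proof. by move=> F_le1; rewrite -sum1_card; apply: leq_sum. Qed.

End Counting.

(* Arithmetic of the bound: for 6 | N the number (N-1) floor((N-2)/2) is
   1 mod 3, so it is never three times the number of blocks. *)
Lemma johnson_residue N : N %% 6 = 0 -> 0 < N ->
  ((N - 1) * ((N - 2) %/ 2)) %% 3 = 1.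
Proof.
move=> N_mod6 N_gt0.
have [m ->] : exists m, N = 6 * m + 6.
  by exists (N %/ 6 - 1); have := divn_eq N 6; rewrite N_mod6; lia.
have -> : (6 * m + 6 - 2) %/ 2 = 3 * m + 2 by lia.
have -> : (6 * m + 6 - 1) * (3 * m + 2) = 3 * (6 * m * m + 9 * m + 3) + 1 by nia.
by rewrite mulnC modnMDl.
Qed.

Lemma johnson_floor N k : N %% 6 = 0 -> 0 < N ->
  3 * k + 2 <= (N - 1) * ((N - 2) %/ 2) ->
  k <= ((N - 1) * ((N - 2) %/ 2)) %/ 3 - 1.
Proof.
move=> N_mod6 N_gt0; have := johnson_residue N_mod6 N_gt0.
by set M := _ * _; have := divn_eq M 3; lia.
Qed.

Section Derived.
Variables (T I : finType) (K : {set I}) (B : I -> {set T}) (P : T).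
Hypothesis block_P : forall k, k \in K -> P \in B k.
Hypothesis block_size : forall k, k \in K -> #|B k| = 4.
Hypothesis block_meet :
  forall k k', k \in K -> k' \in K -> k != k' -> #|B k :&: B k'| <= 2.

Let deg Q := #|[set k in K | Q \in B k]|.
Let codeg Q R := #|[set k in K | (Q \in B k) && (R \in B k)]|.

Let others Q := [set~ P] :\ Q.

Lemma card_others Q : Q != P -> #|others Q| = #|T| - 2.
Proof.
move=> QP; rewrite /others; have := cardsD1 Q [set~ P].
rewrite cardsC1 !inE QP /=.
have : 0 < #|T| by apply/card_gt0P; exists P.
lia.
Qed.

Lemma codeg_sym Q R : codeg Q R = codeg R Q.
Proof. by apply: eq_card => k; rewrite !inE andbA [(R \in _) && _]andbC andbA. Qed.

(* Each block through P has 3 further points. *)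
Lemma degree_sum : \sum_(Q in [set~ P]) deg Q = 3 * #|K|.
Proof.
rewrite incidence_count mulnC -sum_nat_const; apply: eq_bigr => k kK.
have := cardsD1 P (B k); rewrite block_size // block_P // -setDE.
by rewrite add1n => -[].
Qed.

(* Each block through P and Q has 2 further points. *)
Lemma codegree_sum Q : Q != P -> \sum_(R in others Q) codeg Q R = 2 * deg Q.
Proof.
move=> QP.
rewrite (eq_bigr (fun R => #|[set k in [set k in K | Q \in B k] | R \in B k]|));
  last by move=> R _; apply: eq_card => k; rewrite !inE andbA.
rewrite incidence_count mulnC -sum_nat_const; apply: eq_bigr => k.
rewrite inE => /andP [kK Qk].
have -> : B k :&: others Q = (B k :\ P) :\ Q.
  by apply/setP => x; rewrite !inE andbC andbA.
have := cardsD1 P (B k); have := cardsD1 Q (B k :\ P).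
rewrite block_size // block_P // !inE QP Qk /=; lia.
Qed.

Lemma codegree_le1 Q R : Q != P -> R != P -> Q != R -> codeg Q R <= 1.
Proof.
move=> QP RP QR; rewrite leqNgt; apply/negP => /card_gt1P [k [k' []]].
rewrite !inE => /andP [kK /andP [Qk Rk]] /andP [k'K /andP [Qk' Rk']] kk'.
have PQR_sub : [set P; Q; R] \subset B k :&: B k'.
  by apply/subsetP => x; rewrite !inE -!orbA =>
    /or3P [] /eqP ->; rewrite ?block_P ?Qk ?Qk' ?Rk ?Rk'.
have := leq_trans (subset_leq_card PQR_sub) (block_meet kK k'K kk').
rewrite -setUA cardsU1 cards2 !inE QR eq_sym (negbTE QP) eq_sym (negbTE RP).
by [].
Qed.

Lemma codegree_le1_others Q R : Q != P -> R \in others Q -> codeg Q R <= 1.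
Proof.
move=> QP; rewrite !inE => /andP [RQ RP].
by apply: codegree_le1; rewrite // eq_sym.
Qed.

Lemma degree_le Q : Q != P -> 2 * deg Q <= #|T| - 2.
Proof.
move=> QP; rewrite -codegree_sum // -(card_others QP).
by apply: sum_le1_card => R; apply: codegree_le1_others.
Qed.

Lemma degree_defect Q R :
  Q != P -> R \in others Q -> codeg Q R = 0 -> 2 * deg Q < #|T| - 2.
Proof.
move=> QP RQ QR0; rewrite -codegree_sum // (big_setD1 R) //= QR0 add0n.
rewrite -(card_others QP) (cardsD1 R) RQ add1n ltnS.
apply: sum_le1_card => R'; rewrite inE => /andP [_].
exact: codegree_le1_others.
Qed.

Lemma degree_full Q : Q != P ->
  (forall R, R \in others Q -> 0 < codeg Q R) -> 2 * deg Q = #|T| - 2.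
Proof.
move=> QP all_pos; rewrite -codegree_sum // -(card_others QP) -sum1_card.
apply: eq_bigr => R RQ; apply/eqP; rewrite eqn_leq all_pos //.
by rewrite codegree_le1_others.
Qed.

(* A pair Q, R with no common block lowers both deg Q and deg R below
   floor((N-2)/2), so the degree sum misses (N-1) floor((N-2)/2) by 2. *)
Lemma missing_pair_bound Q R : #|T| %% 2 = 0 ->
  Q != P -> R \in others Q -> codeg Q R = 0 ->
  3 * #|K| + 2 <= (#|T| - 1) * ((#|T| - 2) %/ 2).
Proof.
move=> T_even QP RQ QR0; set N := #|T|; set m := (N - 2) %/ 2.
have m_def : 2 * m = N - 2 by rewrite /m; lia.
have RP : R != P by move: RQ; rewrite !inE => /andP [].
have QR : Q \in others R by move: RQ; rewrite !inE eq_sym => /andP [-> _].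
have degQ : deg Q < m by have := degree_defect QP RQ QR0; lia.
have degR : deg R < m.
  by have := degree_defect RP QR (etrans (codeg_sym R Q) QR0); lia.
have rest : \sum_(x in others Q :\ R) deg x <= (N - 3) * m.
  have card_rest : #|others Q :\ R| = N - 3.
    by have := cardsD1 R (others Q); rewrite RQ card_others //; lia.
  rewrite -card_rest -sum_nat_const; apply: leq_sum => x.
  rewrite /others !inE => /and3P [_ _ xP].
  by have := degree_le xP; lia.
have split_m : (N - 1) * m = (N - 3) * m + 2 * m.
  by rewrite -mulnDl; congr (_ * _); lia.
rewrite -degree_sum (big_setD1 Q) ?inE // (big_setD1 R) //=.
by move: rest; rewrite /others; lia.
Qed.

(* If any two points Q, R lie with P in a common block, every degree is
   (N-2)/2 and the degree sum (N-1)(N-2)/2 = 3 #|K| contradicts 6 | N. *)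
Lemma no_missing_pair_impossible : #|T| %% 6 = 0 ->
  ~ (forall Q R, Q != P -> R \in others Q -> 0 < codeg Q R).
Proof.
move=> T_mod6 all_pos; set N := #|T|; set m := (N - 2) %/ 2.
have N_gt0 : 0 < N by apply/card_gt0P; exists P.
have deg_full Q : Q \in [set~ P] -> deg Q = m.
  rewrite !inE => QP; have := degree_full QP (fun R => all_pos Q R QP); rewrite /m; lia.
have := johnson_residue T_mod6 N_gt0; rewrite -/m.
have <- : \sum_(Q in [set~ P]) deg Q = (N - 1) * m.
  by rewrite (eq_bigr _ deg_full) sum_nat_const cardsC1 -/N; lia.
by rewrite degree_sum mulnC modnMl.
Qed.

Lemma derived_sum_bound :
  #|T| %% 6 = 0 -> 3 * #|K| + 2 <= (#|T| - 1) * ((#|T| - 2) %/ 2).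
Proof.
move=> T_mod6; have T_even : #|T| %% 2 = 0 by lia.
case: (boolP [exists Q, exists R, [&& Q != P, R \in others Q & codeg Q R == 0]]).
  move=> /existsP [Q /existsP [R /and3P [QP RQ /eqP QR0]]].
  exact: missing_pair_bound T_even QP RQ QR0.
move=> /existsPn no_zero; exfalso; apply: (no_missing_pair_impossible T_mod6).
move=> Q R QP RQ; rewrite lt0n.
by move: (no_zero Q) => /existsPn /(_ R); rewrite QP RQ.
Qed.

End Derived.

Section Translates.
Variables (u v : nat).

Definition shift (r : nat) (p : 'I_u * 'I_v) : 'I_u * 'I_v := (p.1, shiftc p.2 r).

Lemma shift_add a b p : shift a (shift b p) = shift (b + a) p.
Proof. by case: p => i j; congr pair; apply: val_inj => /=; rewrite modnDml addnA. Qed.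

Lemma shift_mod a b p : a = b %[mod v] -> shift a p = shift b p.
Proof.
by move=> ab; case: p => i j; congr pair; apply: val_inj => /=; rewrite -modnDmr ab modnDmr.
Qed.

Lemma shift0 p : shift 0 p = p.
Proof. by case: p => i j; congr pair; apply: val_inj => /=; rewrite addn0 modn_small. Qed.

(* Shifting by v r - r undoes the shift by r. *)
Lemma shift_inj r : injective (shift r).
Proof.
move=> p q pq; have v_gt0 := ord_pos p.2.
have := congr1 (shift (v * r - r)) pq; rewrite !shift_add subnKC ?leq_pmull //.
by rewrite !(@shift_mod (v * r) 0) ?shift0 // modnMr mod0n.
Qed.

(* Two distinct column offsets r, r' < v are never congruent, so the
   relative shift r - r' (taken as r + (v - r')) is non-trivial. *)
Lemma relative_shift_nontrivial (r r' : 'I_v) : r != r' -> (r + (v - r')) %% v != 0.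
Proof.
move=> rr'; apply/negP => /dvdnP [q].
move: rr' (ltn_ord r) (ltn_ord r'); rewrite -val_eqE /=.
move: (r : nat) (r' : nat) => a b /eqP ab a_lt b_lt.
by case: q => [|[|q]]; rewrite ?mulSn; lia.
Qed.

Definition translate (A : mat u v) (r : nat) : {set 'I_u * 'I_v} := shift r @: A.

Lemma card_translate A r : #|translate A r| = #|A|.
Proof. exact/card_imset/shift_inj. Qed.

(* Two translates meet in the image of the positions counted by a
   correlation of the two matrices. *)
Lemma translate_meet A A' (r r' : 'I_v) :
  #|translate A r :&: translate A' r'| <= corr A A' (r + (v - r')).
Proof.
set s := r + (v - r').
have meet_sub : translate A r :&: translate A' r' \subset
                shift r @: [set p in A | shift s p \in A'].
  apply/subsetP => q; rewrite inE => /andP [/imsetP [p pA ->] /imsetP [p' p'A' pp']].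
  apply/imsetP; exists p => //; rewrite inE pA /=.
  suff -> : shift s p = p' by [].
  apply: (@shift_inj r'); rewrite shift_add -pp'; apply: shift_mod.
  by rewrite /s -addnA subnK ?modnDr // ltnW.
exact: leq_trans (subset_leq_card meet_sub) (leq_imset_card _ _).
Qed.

Lemma translates_packing (C : {set mat u v}) (k k' : mat u v * 'I_v) :
  is_OOC C -> k.1 \in C -> k'.1 \in C -> k != k' ->
  #|translate k.1 k.2 :&: translate k'.1 k'.2| <= 2.
Proof.
case: k k' => A r [A' r'] [_ corr_le2] /= AC A'C kk'.
apply: leq_trans (translate_meet A A' r r') (corr_le2 _ _ _ AC A'C _).
case: (eqVneq A A') => [eqA|//] /=; subst A'.
by apply: relative_shift_nontrivial; apply: contraNneq kk' => ->.
Qed.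

End Translates.

Theorem lemma5p1 (u v : nat) (C : {set mat u v}) :
  0 < u -> 0 < v -> u * v %% 6 = 0 -> is_OOC C -> #|C| <= OOC_bound u v.
Proof.
move=> u_gt0 v_gt0 uv_mod6 OOC_C; have [weight4 _] := OOC_C.
pose K := [set k : mat u v * 'I_v | k.1 \in C].
pose B (k : mat u v * 'I_v) := translate k.1 k.2.
pose J := ((u * v - 1) * ((u * v - 2) %/ 2)) %/ 3 - 1.
have card_T : #|{: 'I_u * 'I_v}| = u * v by rewrite card_prod !card_ord.
have through P : #|[set k in K | P \in B k]| <= J.
  apply: johnson_floor; rewrite ?muln_gt0 ?u_gt0 // -card_T.
  apply: (@derived_sum_bound _ _ _ B P); rewrite ?card_T //.
  - by move=> k; rewrite inE => /andP [].
  - by move=> k; rewrite !inE => /andP [kC _]; rewrite card_translate weight4.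
  - move=> k k'; rewrite !inE => /andP [kC _] /andP [k'C _].
    exact: translates_packing OOC_C kC k'C.
(* each of the v |C| translates covers 4 positions *)
have incidences : \sum_(P in [set: 'I_u * 'I_v]) #|[set k in K | P \in B k]| = #|C| * v * 4.
  rewrite incidence_count (eq_bigr (fun=> 4)); last first.
    by move=> k; rewrite inE setIT card_translate => /weight4.
  have -> : K = setX C [set: 'I_v] by apply/setP => -[A r]; rewrite !inE andbT.
  by rewrite sum_nat_const cardsX cardsT card_ord.
have counted : #|C| * v * 4 <= u * v * J.
  by rewrite -incidences -card_T -cardsT -sum_nat_const; apply: leq_sum.
rewrite /OOC_bound -/J leq_divRL // -(leq_pmul2r v_gt0).
by rewrite mulnAC [u * J * v]mulnAC.
Qed.
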